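(* Let $p\geq 2$ be an integer and $r=2^{1/(p-1)}$. Then $\mathcal{M}_3^p\subseteq\overline{\mathbf{D_3}}(0;r,r)$, where $\overline{\mathbf{D_3}}(0;r,r)=\{\zeta_1\gamma_2+\zeta_2\overline{\gamma}_2 : \zeta_1,\zeta_2\in\mathbb{M}(2),\ \|\zeta_1\|_2\leq r,\ \|\zeta_2\|_2\leq r\}$.
   Context: The tricomplex numbers $\mathbb{M}(3)$ form the commutative real algebra generated by commuting units $\mathbf{i_1},\mathbf{i_2},\mathbf{i_3}$ with $\mathbf{i_k}^2=-1$; set $\mathbf{j_1}=\mathbf{i_1}\mathbf{i_2}$, $\mathbf{j_2}=\mathbf{i_1}\mathbf{i_3}$, $\mathbf{j_3}=\mathbf{i_2}\mathbf{i_3}$, $\mathbf{i_4}=\mathbf{i_1}\mathbf{i_2}\mathbf{i_3}$. It has real basis $1,\mathbf{i_1},\mathbf{i_2},\mathbf{i_3},\mathbf{i_4},\mathbf{j_1},\mathbf{j_2},\mathbf{j_3}$ and norm $\|\cdot\|_3$ equal to the Euclidean norm of the 8 real coordinates. The bicomplex numbers $\mathbb{M}(2)$ are the subalgebra spanned by $1,\mathbf{i_1},\mathbf{i_2},\mathbf{j_1}$, with norm $\|\cdot\|_2$ the Euclidean norm of its 4 coordinates. $\gamma_2=\frac{1+\mathbf{j_3}}{2}$, $\overline{\gamma}_2=\frac{1-\mathbf{j_3}}{2}$. For $c\in\mathbb{M}(3)$, $Q_{p,c}(\eta)=\eta^p+c$, $Q_{p,c}^m$ its $m$-fold iterate, and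 $\mathcal{M}_3^p=\{c\in\mathbb{M}(3) : (Q_{p,c}^m(0))_{m\geq1}\text{ is bounded in }\|\cdot\|_3\}$. *)

From Stdlib Require Import Reals Lra.
Open Scope R_scope.

(* Tricomplex numbers built by the standard iterated (Cayley-Dickson-like,
   commutative) construction:
     C    = R x R      : a + b i1
     M(2) = C x C      : w1 + w2 i2       (bicomplex numbers)
     M(3) = M(2) x M(2): z1 + z2 i3       (tricomplex numbers)
   With z2 = a + b i1 + c i2 + d j1, z2 i3 = a i3 + b j2 + c j3 + d i4, so the
   8 real coordinates are exactly the coordinates in the basis
   1,i1,i2,j1,i3,j2,j3,i4. *)

Definition Cx : Type := (R * R)%type.
Definition C0 : Cx := (0, 0).
Definition C1 : Cx := (1, 0).
Definition Cadd (x y : Cx) : Cx := (fst x + fst y, snd x + snd y).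
Definition Copp (x : Cx) : Cx := (- fst x, - snd x).
Definition Cmul (x y : Cx) : Cx :=
  (fst x * fst y - snd x * snd y, fst x * snd y + snd x * fst y).
Definition Csq (x : Cx) : R := fst x ^ 2 + snd x ^ 2.

Definition M2 : Type := (Cx * Cx)%type.
Definition M2zero : M2 := (C0, C0).
Definition M2one : M2 := (C1, C0).
Definition M2add (x y : M2) : M2 := (Cadd (fst x) (fst y), Cadd (snd x) (snd y)).
Definition M2opp (x : M2) : M2 := (Copp (fst x), Copp (snd x)).
Definition M2mul (x y : M2) : M2 :=
  (Cadd (Cmul (fst x) (fst y)) (Copp (Cmul (snd x) (snd y))),
   Cadd (Cmul (fst x) (snd y)) (Cmul (snd x) (fst y))).
Definition M2sq (x : M2) : R := Csq (fst x) + Csq (snd x).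
Definition norm2 (x : M2) : R := sqrt (M2sq x).

Definition M3 : Type := (M2 * M2)%type.
Definition M3zero : M3 := (M2zero, M2zero).
Definition M3one : M3 := (M2one, M2zero).
Definition M3add (x y : M3) : M3 := (M2add (fst x) (fst y), M2add (snd x) (snd y)).
Definition M3mul (x y : M3) : M3 :=
  (M2add (M2mul (fst x) (fst y)) (M2opp (M2mul (snd x) (snd y))),
   M2add (M2mul (fst x) (snd y)) (M2mul (snd x) (fst y))).
Definition norm3 (x : M3) : R := sqrt (M2sq (fst x) + M2sq (snd x)).

Definition M2toM3 (z : M2) : M3 := (z, M2zero).

(* j3 = i2 i3 ; in M(2), i2 = (0, 1) *)
Definition i2_M2 : M2 := (C0, C1).
Definition j3 : M3 := (M2zero, i2_M2).
Definition half : M3 := ((( / 2, 0), C0), M2zero).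
Definition gamma2 : M3 := M3mul half (M3add M3one j3).
Definition gamma2bar : M3 :=
  M3mul half (M3add M3one (M3mul ((M2opp M2one), M2zero) j3)).

Fixpoint M3pow (x : M3) (n : nat) : M3 :=
  match n with
  | O => M3one
  | S k => M3mul x (M3pow x k)
  end.

Definition Q (p : nat) (c : M3) (eta : M3) : M3 := M3add (M3pow eta p) c.

Definition Qiter (p : nat) (c : M3) (m : nat) : M3 := Nat.iter m (Q p c) M3zero.

Definition Mandel3 (p : nat) (c : M3) : Prop :=
  exists B : R, forall m : nat, (1 <= m)%nat -> norm3 (Qiter p c m) <= B.

Definition closedDisk3 (r1 r2 : R) (c : M3) : Prop :=
  exists z1 z2 : M2, norm2 z1 <= r1 /\ norm2 z2 <= r2 /\
    c = M3add (M3mul (M2toM3 z1) gamma2) (M3mul (M2toM3 z2) gamma2bar).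

(* The four real-algebra homomorphisms [M3char s t : M(3) -> C] (sending
   i1, i2, i3 to i, ±i, ±i) satisfy [|χ(x)| <= 2 ‖x‖_3], so they map a bounded
   orbit of [Q_{p,c}] from 0 to a bounded orbit of [z^p + χ(c)].  A complex
   parameter with [|c|^(p-1) > 2] escapes geometrically, hence [|χ(c)| <= r]
   for all four characters.  Finally, the squared norm of each idempotent
   component of [c] is the mean of [|χ(c)|^2] over the two characters that
   see that component. *)

From Pilot Require Import Defs.
From Stdlib Require Import Reals Psatz.
From Coquelicot Require Import Coquelicot.
(* Coquelicot also defines [C0] and [C1]; the complex constants must win. *)
Import Pilot.Defs.
Open Scope R_scope.

Lemma pow_lt_compat_l (a b : R) (n : nat) :
  0 <= a < b -> (n <> 0)%nat -> a ^ n < b ^ n.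
Proof.
  intros [Ha Hab] Hn. destruct n as [|k]; [lia|]. simpl.
  assert (a ^ k <= b ^ k) by (apply pow_incr; lra).
  assert (0 < b ^ k) by (apply pow_lt; lra).
  nra.
Qed.

Lemma pow_le_reg_l (a b : R) (n : nat) :
  0 <= b -> (n <> 0)%nat -> a ^ n <= b ^ n -> a <= b.
Proof.
  intros Hb Hn Hle. destruct (Rle_lt_dec a b) as [|Hlt]; [assumption|].
  assert (b ^ n < a ^ n) by (apply pow_lt_compat_l; [lra | assumption]). lra.
Qed.

Fixpoint Cpow (z : Cx) (n : nat) : Cx :=
  match n with O => C1 | S k => Cmul z (Cpow z k) end.

Definition Citer (p : nat) (c : Cx) (m : nat) : Cx :=
  Nat.iter m (fun z => Cadd (Cpow z p) c) C0.

Lemma Cmod_Cpow (z : Cx) (n : nat) : Cmod (Cpow z n) = Cmod z ^ n.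
Proof.
  induction n as [|n IH]; simpl.
  - exact Cmod_1.
  - change (Cmul z (Cpow z n)) with (Cmult z (Cpow z n)).
    now rewrite Cmod_mult, IH.
Qed.

Lemma Cmod_Cadd_ge (z c : Cx) : Cmod z - Cmod c <= Cmod (Cadd z c).
Proof.
  pose proof (Cmod_triangle (Cadd z c) (Copp c)) as H.
  replace (Cplus (Cadd z c) (Copp c)) with z in H
    by (destruct z, c; unfold Cplus, Cadd, Copp; simpl; f_equal; ring).
  rewrite Cmod_opp in H. lra.
Qed.

(* Once [|z| >= |c|], one step gives
   [|z^(q+1) + c| >= |z| |c|^q - |c| >= |z| (|c|^q - 1)]. *)
Lemma Citer_ge_geometric (q : nat) (c : Cx) :
  1 < Cmod c ^ q - 1 ->
  forall n, Cmod c * (Cmod c ^ q - 1) ^ n <= Cmod (Citer (S q) c (S n)).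
Proof.
  set (a := Cmod c). set (l := a ^ q - 1). intros Hl n.
  assert (Ha : 0 <= a) by apply Cmod_ge_0.
  induction n as [|n IH].
  - rewrite Rmult_1_r. apply Req_le. unfold a. f_equal.
    destruct c; unfold Citer, Cadd, Cpow, Cmul, C0; simpl; f_equal; ring.
  - set (z := Citer (S q) c (S n)) in *.
    change (Citer (S q) c (S (S n))) with (Cadd (Cpow z (S q)) c).
    pose proof (Cmod_Cadd_ge (Cpow z (S q)) c) as Hstep.
    rewrite Cmod_Cpow in Hstep. simpl pow in Hstep. fold a in Hstep.
    assert (1 <= l ^ n) by (apply pow_R1_Rle; lra).
    assert (a <= Cmod z) by nra.
    assert (a ^ q <= Cmod z ^ q) by (apply pow_incr; lra).
    assert (Cmod z * a ^ q <= Cmod z * Cmod z ^ q)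
      by (apply Rmult_le_compat_l; lra).
    assert (a * l ^ n * l <= Cmod z * l) by (apply Rmult_le_compat_r; lra).
    simpl pow. unfold l in *. nra.
Qed.

Lemma Citer_escapes (p : nat) (c : Cx) :
  (2 <= p)%nat -> 2 < Cmod c ^ (p - 1) ->
  forall B, exists m, (1 <= m)%nat /\ B < Cmod (Citer p c m).
Proof.
  intros Hp Hc B.
  destruct p as [|q]; [lia|]. rewrite Nat.sub_1_r in Hc. simpl pred in Hc.
  set (a := Cmod c) in *. set (l := a ^ q - 1).
  assert (Hl : 1 < l) by (unfold l; lra).
  assert (Ha : 0 < a).
  { destruct (Cmod_ge_0 c) as [|Ha0]; [assumption|].
    fold a in Ha0. rewrite <- Ha0, pow_i in Hc by lia. lra. }
  destruct (Pow_x_infinity l) with (b := B / a + 1) as [N HN].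
  { rewrite Rabs_right; lra. }
  specialize (HN N (Nat.le_refl _)).
  rewrite Rabs_right in HN by (apply Rle_ge, pow_le; lra).
  exists (S N). split; [lia|].
  pose proof (Citer_ge_geometric q c Hl N) as Hgrowth.
  fold a l in Hgrowth.
  assert (a * (B / a + 1) <= a * l ^ N) by (apply Rmult_le_compat_l; lra).
  assert (a * (B / a + 1) = B + a) by (field; lra).
  lra.
Qed.

Lemma Citer_bounded_Cmod_le (p : nat) (c : Cx) (B : R) :
  (2 <= p)%nat -> (forall m, (1 <= m)%nat -> Cmod (Citer p c m) <= B) ->
  Cmod c ^ (p - 1) <= 2.
Proof.
  intros Hp HB. apply Rnot_lt_le. intros Hc.
  destruct (Citer_escapes p c Hp Hc B) as [m [Hm HBm]].
  specialize (HB m Hm). lra.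
Qed.

Definition sg (b : bool) : R := if b then 1 else -1.

(* [i1 ↦ i], [i2 ↦ sg s * i], [i3 ↦ sg t * i]; the coordinates of [x] are
   read in the order 1, i1, i2, j1, i3, j2, j3, i4. *)
Definition M3char (s t : bool) (x : M3) : Cx :=
  let '((a, b), (c, d)) := x in
  (fst a - sg s * snd b - sg t * snd c - sg s * sg t * fst d,
   snd a + sg s * fst b + sg t * fst c - sg s * sg t * snd d).

Lemma M3char_mul s t x y :
  M3char s t (M3mul x y) = Cmul (M3char s t x) (M3char s t y).
Proof.
  destruct x as [[[a1 a2][b1 b2]][[c1 c2][d1 d2]]].
  destruct y as [[[e1 e2][f1 f2]][[g1 g2][h1 h2]]].
  destruct s, t; unfold M3char, M3mul, M2mul, M2add, M2opp, Cmul, Cadd, Copp, sg;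
    simpl; f_equal; ring.
Qed.

Lemma M3char_add s t x y :
  M3char s t (M3add x y) = Cadd (M3char s t x) (M3char s t y).
Proof.
  destruct x as [[[a1 a2][b1 b2]][[c1 c2][d1 d2]]].
  destruct y as [[[e1 e2][f1 f2]][[g1 g2][h1 h2]]].
  unfold M3char, M3add, M2add, Cadd; simpl; f_equal; ring.
Qed.

Lemma M3char_pow s t x n : M3char s t (M3pow x n) = Cpow (M3char s t x) n.
Proof.
  induction n as [|n IH]; cbn [M3pow Cpow].
  - unfold M3char, C1; simpl; f_equal; ring.
  - now rewrite M3char_mul, IH.
Qed.

Lemma M3char_Qiter s t p c m :
  M3char s t (Qiter p c m) = Citer p (M3char s t c) m.
Proof.
  induction m as [|m IH].
  - unfold Qiter, Citer, M3char, M3zero, M2zero, C0; simpl; f_equal; ring.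
  - unfold Qiter, Citer in *. simpl Nat.iter.
    now rewrite <- IH, <- M3char_pow, <- M3char_add.
Qed.

Lemma sqr_sum4_le x1 x2 x3 x4 :
  (x1 + x2 + x3 + x4) ^ 2 <= 4 * (x1 ^ 2 + x2 ^ 2 + x3 ^ 2 + x4 ^ 2).
Proof.
  pose proof (pow2_ge_0 (x1 - x2)); pose proof (pow2_ge_0 (x1 - x3));
  pose proof (pow2_ge_0 (x1 - x4)); pose proof (pow2_ge_0 (x2 - x3));
  pose proof (pow2_ge_0 (x2 - x4)); pose proof (pow2_ge_0 (x3 - x4)).
  nra.
Qed.

Lemma sqr_signed_sum4_le (s t : bool) (a b c d : R) :
  (a + sg s * b + sg t * c + sg s * sg t * d) ^ 2
    <= 4 * (a ^ 2 + b ^ 2 + c ^ 2 + d ^ 2).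
Proof.
  replace (a ^ 2 + b ^ 2 + c ^ 2 + d ^ 2)
    with (a ^ 2 + (sg s * b) ^ 2 + (sg t * c) ^ 2 + (sg s * sg t * d) ^ 2)
    by (destruct s, t; unfold sg; ring).
  apply sqr_sum4_le.
Qed.

Lemma Cmod_M3char_le s t x : Cmod (M3char s t x) <= 2 * norm3 x.
Proof.
  unfold Cmod, norm3.
  rewrite <- (sqrt_pow2 2), <- sqrt_mult_alt by lra.
  apply sqrt_le_1_alt.
  destruct x as [[[a1 a2][b1 b2]][[c1 c2][d1 d2]]].
  unfold M3char, M2sq, Csq; simpl fst; simpl snd.
  pose proof (sqr_signed_sum4_le s t a1 (- b2) (- c2) (- d1)).
  pose proof (sqr_signed_sum4_le s t a2 b1 c1 (- d2)).
  nra.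
Qed.

Lemma Mandel3_Cmod_M3char_le (p : nat) (c : M3) (s t : bool) :
  (2 <= p)%nat -> Mandel3 p c -> Cmod (M3char s t c) ^ (p - 1) <= 2.
Proof.
  intros Hp [B HB].
  apply (Citer_bounded_Cmod_le p _ (2 * B) Hp). intros m Hm.
  rewrite <- M3char_Qiter.
  pose proof (Cmod_M3char_le s t (Qiter p c m)). specialize (HB m Hm). lra.
Qed.

Definition idem1 (x : M3) : M2 :=
  let '(((a1, a2), (b1, b2)), ((c1, c2), (d1, d2))) := x in
  ((a1 + d1, a2 + d2), (b1 - c1, b2 - c2)).

Definition idem2 (x : M3) : M2 :=
  let '(((a1, a2), (b1, b2)), ((c1, c2), (d1, d2))) := x in
  ((a1 - d1, a2 - d2), (b1 + c1, b2 + c2)).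

Lemma M3_idempotent_decomposition (x : M3) :
  x = M3add (M3mul (M2toM3 (idem1 x)) gamma2) (M3mul (M2toM3 (idem2 x)) gamma2bar).
Proof.
  destruct x as [[[a1 a2][b1 b2]][[c1 c2][d1 d2]]].
  unfold idem1, idem2, M3add, M3mul, M2toM3, gamma2, gamma2bar, half, M3one, j3,
    i2_M2, M2add, M2mul, M2opp, M2one, M2zero, Cadd, Cmul, Copp, C0, C1; simpl.
  repeat match goal with |- (_, _) = (_, _) => f_equal end; field.
Qed.

(* [idem1] is the component along [gamma2], on which [j3] acts as [1]: it is
   seen by the two characters with [sg s * sg t = -1]. *)
Lemma M2sq_idem1 (x : M3) :
  M2sq (idem1 x) = (Csq (M3char true false x) + Csq (M3char false true x)) / 2.
Proof.
  destruct x as [[[a1 a2][b1 b2]][[c1 c2][d1 d2]]].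
  unfold idem1, M3char, M2sq, Csq, sg; simpl; field.
Qed.

Lemma M2sq_idem2 (x : M3) :
  M2sq (idem2 x) = (Csq (M3char true true x) + Csq (M3char false false x)) / 2.
Proof.
  destruct x as [[[a1 a2][b1 b2]][[c1 c2][d1 d2]]].
  unfold idem2, M3char, M2sq, Csq, sg; simpl; field.
Qed.

Lemma norm2_le_of_mean (z : M2) (u v : Cx) (r : R) :
  M2sq z = (Csq u + Csq v) / 2 -> Cmod u <= r -> Cmod v <= r -> norm2 z <= r.
Proof.
  intros Hz Hu Hv.
  assert (Hsq : forall w : Cx, Cmod w <= r -> Csq w <= r ^ 2).
  { intros w Hw. unfold Csq.
    rewrite <- (pow2_sqrt (fst w ^ 2 + snd w ^ 2)) by nra.
    apply pow_incr. split; [apply sqrt_pos | exact Hw]. }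
  assert (0 <= r) by (pose proof (Cmod_ge_0 u); lra).
  unfold norm2. rewrite <- (sqrt_pow2 r), Hz by assumption.
  apply sqrt_le_1_alt. pose proof (Hsq u Hu). pose proof (Hsq v Hv). lra.
Qed.

Theorem mainTheorem13 (p : nat) (hp : (2 <= p)%nat) :
  forall c : M3, Mandel3 p c ->
    closedDisk3 (Rpower 2 (/ INR (p - 1))) (Rpower 2 (/ INR (p - 1))) c.
Proof.
  intros c Hc.
  set (r := Rpower 2 (/ INR (p - 1))).
  assert (Hr : 0 < r) by apply exp_pos.
  assert (Hrp : r ^ (p - 1) = 2).
  { unfold r. rewrite <- Rpower_pow, Rpower_mult, Rinv_l by
      (apply exp_pos || (apply not_0_INR; lia)).
    apply Rpower_1. lra. }
  assert (Hchar : forall s t, Cmod (M3char s t c) <= r).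
  { intros s t. apply (pow_le_reg_l _ _ (p - 1)); [lra | lia |].
    rewrite Hrp. exact (Mandel3_Cmod_M3char_le p c s t hp Hc). }
  exists (idem1 c), (idem2 c). split; [| split].
  - exact (norm2_le_of_mean _ _ _ r (M2sq_idem1 c) (Hchar _ _) (Hchar _ _)).
  - exact (norm2_le_of_mean _ _ _ r (M2sq_idem2 c) (Hchar _ _) (Hchar _ _)).
  - apply M3_idempotent_decomposition.
Qed.
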